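(* Fix $d\ge2$, $k\in\{1,\dots,d-1\}$ and $\theta\in[0,1)$. Let $\sigma_1\ge\dots\ge\sigma_d\ge0$ satisfy $\sigma_{k+2}=\dots=\sigma_d=0$ and $\sum_{j=1}^{k+1}\sigma_j^2=1$. If $\theta=0$ assume $\sigma_{k+1}=0$; if $\theta>0$ assume $\sigma_{k+1}\le\frac\theta k\sum_{j=1}^k\sigma_j$. Then $$\sum_{j=1}^{k+1}\sigma_j\le\frac{k+\theta}{\sqrt{k+\theta^2}},$$ with equality if and only if $\sigma_1=\dots=\sigma_k=\frac1{\sqrt{k+\theta^2}}$ and $\sigma_{k+1}=\frac\theta{\sqrt{k+\theta^2}}$. *)

From Stdlib Require Import Reals Lra Lia.
Open Scope R_scope.

(* sum_{j=1}^{n} f j  (empty sum = 0 when n = 0) *)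
Definition sum1 (f : nat -> R) (n : nat) : R :=
  match n with
  | O => 0
  | S m => sum_f_R0 (fun i => f (S i)) m
  end.

(* Write s = sigma_1 + ... + sigma_k and t = sigma_(k+1).  Cauchy-Schwarz and the
   normalisation give s^2 + k t^2 <= k, and the hypotheses on sigma_(k+1) give
   k t <= theta s.  The identity
     (k + theta^2) (s + t) = (k + theta) (s + theta t) + (1 - theta) (k t - theta s)
   bounds s + t, since k (s + theta t)^2 + (theta s - k t)^2 = (k + theta^2) (s^2 + k t^2)
   forces s + theta t <= sqrt (k + theta^2).  Equality forces k t = theta s and
   s + theta t = sqrt (k + theta^2), which pins down s and t; then sigma_1, ..., sigma_k
   attain equality in Cauchy-Schwarz, so they are all equal. *)

From Stdlib Require Import Reals Lra Lia.
Open Scope R_scope.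

Lemma sum1_succ (f : nat -> R) (n : nat) : sum1 f (S n) = sum1 f n + f (S n).
Proof.
  destruct n as [|m]; [simpl; ring | reflexivity].
Qed.

Lemma sum1_ext (f g : nat -> R) (n : nat) :
  (forall j, (1 <= j)%nat -> (j <= n)%nat -> f j = g j) -> sum1 f n = sum1 g n.
Proof.
  induction n as [|n IHn]; intros Hfg; [reflexivity|].
  rewrite !sum1_succ, (Hfg (S n)) by lia.
  rewrite IHn; [reflexivity|].
  intros j Hj1 Hjn. apply Hfg; lia.
Qed.

Lemma sum1_const (a : R) (n : nat) : sum1 (fun _ => a) n = INR n * a.
Proof.
  induction n as [|n IHn]; [simpl; ring|].
  rewrite sum1_succ, IHn, S_INR. ring.
Qed.

Lemma sum1_sq_nonneg (f : nat -> R) (n : nat) : 0 <= sum1 (fun j => f j ^ 2) n.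
Proof.
  induction n as [|n IHn]; [simpl; lra|].
  rewrite sum1_succ. pose proof (pow2_ge_0 (f (S n))). lra.
Qed.

Lemma sum1_sq_eq0 (f : nat -> R) (n : nat) :
  sum1 (fun j => f j ^ 2) n = 0 -> forall j, (1 <= j)%nat -> (j <= n)%nat -> f j = 0.
Proof.
  induction n as [|n IHn]; intros H j Hj1 Hjn; [lia|].
  rewrite sum1_succ in H.
  pose proof (sum1_sq_nonneg f n). pose proof (pow2_ge_0 (f (S n))).
  destruct (Nat.eq_dec j (S n)) as [->|Hne].
  - nra.
  - apply IHn; lra || lia.
Qed.

Lemma sum1_sq_sub (f : nat -> R) (a : R) (n : nat) :
  sum1 (fun j => (f j - a) ^ 2) n =
  sum1 (fun j => f j ^ 2) n - 2 * a * sum1 f n + INR n * a ^ 2.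
Proof.
  induction n as [|n IHn]; [simpl; ring|].
  rewrite !sum1_succ, IHn, S_INR. ring.
Qed.

Lemma sum1_Cauchy_Schwarz (f : nat -> R) (n : nat) :
  (sum1 f n) ^ 2 <= INR n * sum1 (fun j => f j ^ 2) n.
Proof.
  destruct n as [|m]; [simpl; lra|].
  set (N := INR (S m)).
  assert (HN : 0 < N) by apply lt_0_INR, Nat.lt_0_succ.
  pose proof (sum1_sq_nonneg (fun j => f j - sum1 f (S m) / N) (S m)) as Hdev.
  cbv beta in Hdev. rewrite sum1_sq_sub in Hdev. fold N in Hdev.
  apply Rmult_le_compat_l with (r := N) in Hdev; [|lra].
  replace (N * (sum1 (fun j => f j ^ 2) (S m) - 2 * (sum1 f (S m) / N) * sum1 f (S m)
              + N * (sum1 f (S m) / N) ^ 2))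
    with (N * sum1 (fun j => f j ^ 2) (S m) - sum1 f (S m) ^ 2) in Hdev by (field; lra).
  lra.
Qed.

Lemma sum1_eq_const_of_Cauchy_Schwarz_eq (f : nat -> R) (a : R) (n : nat) :
  sum1 f n = INR n * a -> sum1 (fun j => f j ^ 2) n = INR n * a ^ 2 ->
  forall j, (1 <= j)%nat -> (j <= n)%nat -> f j = a.
Proof.
  intros Hsum Hsq j Hj1 Hjn.
  assert (Hdev : sum1 (fun j => (f j - a) ^ 2) n = 0).
  { rewrite sum1_sq_sub, Hsum, Hsq. ring. }
  pose proof (sum1_sq_eq0 _ _ Hdev j Hj1 Hjn). lra.
Qed.

Section BlockBound.

Variables K theta s t : R.
Hypothesis HK : 0 < K.
Hypothesis Hconstr : s ^ 2 + K * t ^ 2 <= K.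

Let c := sqrt (K + theta ^ 2).

Lemma sqrt_add_sq_pos : 0 < c.
Proof. apply sqrt_lt_R0. nra. Qed.

Lemma sqrt_add_sq_mul_self : c * c = K + theta ^ 2.
Proof. apply sqrt_sqrt. nra. Qed.

Lemma mixed_sum_le_sqrt : s + theta * t <= c.
Proof.
  pose proof sqrt_add_sq_pos. pose proof sqrt_add_sq_mul_self.
  assert (Hsq : K * (s + theta * t) ^ 2 + (theta * s - K * t) ^ 2
                = (K + theta ^ 2) * (s ^ 2 + K * t ^ 2)) by ring.
  assert (K * (s + theta * t) ^ 2 <= K * (c * c)).
  { pose proof (pow2_ge_0 (theta * s - K * t)). pose proof (pow2_ge_0 theta). nra. }
  assert (Hle : (s + theta * t) ^ 2 <= c * c) by (apply Rmult_le_reg_l with K; lra).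
  nra.
Qed.

Hypothesis Htheta : 0 <= theta <= 1.
Hypothesis Hslope : K * t <= theta * s.

Lemma block_sum_identity :
  (K + theta ^ 2) * (s + t) = (K + theta) * (s + theta * t) + (1 - theta) * (K * t - theta * s).
Proof. ring. Qed.

Lemma block_sum_le : s + t <= (K + theta) / c.
Proof.
  pose proof sqrt_add_sq_pos. pose proof mixed_sum_le_sqrt.
  assert (Hmul : c * (c * (s + t)) <= c * (K + theta)).
  { rewrite <- Rmult_assoc, sqrt_add_sq_mul_self, block_sum_identity.
    assert ((K + theta) * (s + theta * t) <= (K + theta) * c) by (apply Rmult_le_compat_l; lra).
    assert ((1 - theta) * (K * t - theta * s) <= 0) by nra.
    lra. }
  apply Rmult_le_reg_l with c; [lra|].
  replace (c * ((K + theta) / c)) with (K + theta) by (field; lra).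
  apply Rmult_le_reg_l with c; lra.
Qed.

Lemma block_sum_eq_inv : theta < 1 -> s + t = (K + theta) / c -> s = K / c /\ t = theta / c.
Proof.
  intros Htheta1 Heq.
  pose proof sqrt_add_sq_pos. pose proof sqrt_add_sq_mul_self. pose proof mixed_sum_le_sqrt.
  assert (Hct : c * (s + t) = K + theta) by (rewrite Heq; field; lra).
  assert (Hsplit : (K + theta) * (c - (s + theta * t)) + (1 - theta) * (theta * s - K * t) = 0).
  { replace ((K + theta) * (c - (s + theta * t)) + (1 - theta) * (theta * s - K * t))
      with ((K + theta) * c - (K + theta ^ 2) * (s + t)) by (rewrite block_sum_identity; ring).
    rewrite <- sqrt_add_sq_mul_self, <- Hct. ring. }
  assert (0 <= (K + theta) * (c - (s + theta * t))) by (apply Rmult_le_pos; lra).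
  assert (0 <= (1 - theta) * (theta * s - K * t)) by (apply Rmult_le_pos; lra).
  assert (Hmixed : s + theta * t = c) by nra.
  assert (Hslope_eq : K * t = theta * s) by nra.
  assert (HS : s = K / c).
  { apply Rmult_eq_reg_l with (K + theta ^ 2); [|nra].
    rewrite <- sqrt_add_sq_mul_self. field_simplify; [|lra]. nra. }
  split; [exact HS|].
  apply Rmult_eq_reg_l with K; [|lra].
  rewrite Hslope_eq, HS. field. lra.
Qed.

End BlockBound.

Theorem lemma3p15 (d k : nat) (theta : R) (sigma : nat -> R)
  (hd : (2 <= d)%nat) (hk1 : (1 <= k)%nat) (hk2 : (k <= d - 1)%nat)
  (htheta : 0 <= theta < 1)
  (hmono : forall i, (1 <= i)%nat -> (i < d)%nat -> sigma (S i) <= sigma i)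
  (hnonneg : 0 <= sigma d)
  (hzero : forall i, (k + 2 <= i)%nat -> (i <= d)%nat -> sigma i = 0)
  (hnorm : sum1 (fun j => (sigma j)^2) (k + 1) = 1)
  (hcase0 : theta = 0 -> sigma (k + 1)%nat = 0)
  (hcasepos : 0 < theta -> sigma (k + 1)%nat <= theta / INR k * sum1 sigma k) :
  sum1 sigma (k + 1) <= (INR k + theta) / sqrt (INR k + theta^2) /\
  (sum1 sigma (k + 1) = (INR k + theta) / sqrt (INR k + theta^2) <->
    (forall j, (1 <= j)%nat -> (j <= k)%nat -> sigma j = 1 / sqrt (INR k + theta^2)) /\
    sigma (k + 1)%nat = theta / sqrt (INR k + theta^2)).
Proof.
  rewrite Nat.add_1_r, sum1_succ in *.
  set (K := INR k) in *.
  set (c := sqrt (K + theta ^ 2)).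
  assert (HK : 0 < K) by (apply lt_0_INR; lia).
  pose proof (sqrt_add_sq_pos K theta HK) as Hc.
  pose proof (sqrt_add_sq_mul_self K theta HK) as Hcc.
  fold c in Hc, Hcc.
  assert (Hconstr : sum1 sigma k ^ 2 + K * sigma (S k) ^ 2 <= K).
  { pose proof (sum1_Cauchy_Schwarz sigma k) as HCS. fold K in HCS.
    replace (sum1 (fun j => sigma j ^ 2) k) with (1 - sigma (S k) ^ 2) in HCS by lra.
    lra. }
  assert (Hslope : K * sigma (S k) <= theta * sum1 sigma k).
  { destruct (Req_dec theta 0) as [E|E].
    - rewrite (hcase0 E), E. lra.
    - apply Rmult_le_compat_l with (r := K) in hcasepos; [|lra|lra].
      replace (K * (theta / K * sum1 sigma k)) with (theta * sum1 sigma k) in hcasepos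
        by (field; lra).
      exact hcasepos. }
  split; [now apply block_sum_le; lra|].
  split.
  - intro Heq.
    destruct (block_sum_eq_inv K theta (sum1 sigma k) (sigma (S k)) HK Hconstr
                ltac:(lra) Hslope ltac:(lra) Heq) as [HS Ht].
    fold c in HS, Ht.
    split; [|exact Ht].
    apply sum1_eq_const_of_Cauchy_Schwarz_eq.
    + rewrite HS. fold K. unfold Rdiv. ring.
    + fold K.
      rewrite Ht in hnorm.
      apply Rmult_eq_reg_l with (c * c); [|nra].
      replace (c * c * (K * (1 / c) ^ 2)) with K by (field; lra).
      replace (sum1 (fun j => sigma j ^ 2) k) with (1 - (theta / c) ^ 2) by lra.
      field_simplify; lra.
  - intros [Hj Ht].
    rewrite (sum1_ext sigma (fun _ => 1 / c) k Hj), sum1_const, Ht.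
    fold K. field. lra.
Qed.
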